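(* Let $A\in\mathbb{C}^{m\times n}$ have rank $r$, $B\in\mathbb{C}^{m\times n}$ have rank $s$, and $E=B-A$. Then $$\|B^{\dagger}-A^{\dagger}\|_{F}^{2}\geq\max\big\{\alpha'_{1}+\|B^{\dagger}EA^{\dagger}\|_{F}^{2},\ \alpha'_{2}+\|A^{\dagger}EB^{\dagger}\|_{F}^{2}\big\},$$ where $$\alpha'_{1}:=\frac{\|A^{\dagger}E\|_{F}^{2}-\|A^{\dagger}EB^{\dagger}B\|_{F}^{2}}{\|A\|_{2}^{2}}+\frac{\|EB^{\dagger}\|_{F}^{2}-\|AA^{\dagger}EB^{\dagger}\|_{F}^{2}}{\|B\|_{2}^{2}},$$ $$\alpha'_{2}:=\frac{\|EA^{\dagger}\|_{F}^{2}-\|BB^{\dagger}EA^{\dagger}\|_{F}^{2}}{\|A\|_{2}^{2}}+\frac{\|B^{\dagger}E\|_{F}^{2}-\|B^{\dagger}EA^{\dagger}A\|_{F}^{2}}{\|B\|_{2}^{2}}.$$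
   Context: $M^{\dagger}$ denotes the Moore–Penrose inverse of $M$, $\|\cdot\|_{2}$ the spectral norm and $\|\cdot\|_{F}$ the Frobenius norm. *)

From HB Require Import structures.
From mathcomp Require Import all_boot all_order all_algebra.
From mathcomp Require Import complex.
From mathcomp Require Import classical_sets reals.
Set Implicit Arguments. Unset Strict Implicit. Unset Printing Implicit Defensive.
Import Order.TTheory GRing.Theory Num.Theory.
Local Open Scope ring_scope.

Definition ctrmx (R : realType) m n (A : 'M[R[i]]_(m, n)) : 'M[R[i]]_(n, m) :=
  (map_mx Num.conj A)^T.

(* X is the Moore--Penrose inverse of A (the four Penrose equations);
   it exists and is unique for every complex matrix A *)
Definition is_pinv (R : realType) m n (A : 'M[R[i]]_(m, n)) (X : 'M[R[i]]_(n, m)) :=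
  [/\ A *m X *m A = A, X *m A *m X = X,
      ctrmx (A *m X) = A *m X & ctrmx (X *m A) = X *m A].

Definition frobn (R : realType) m n (A : 'M[R[i]]_(m, n)) : R :=
  Num.sqrt (\sum_(i < m) \sum_(j < n) (@complex.Re R (A i j) ^+ 2 + @complex.Im R (A i j) ^+ 2)).

Definition vnorm (R : realType) n (x : 'cV[R[i]]_n) : R :=
  Num.sqrt (\sum_(i < n) (@complex.Re R (x i 0) ^+ 2 + @complex.Im R (x i 0) ^+ 2)).

Definition specn (R : realType) m n (A : 'M[R[i]]_(m, n)) : R :=
  sup [set vnorm (A *m x) | x in [set x : 'cV[R[i]]_n | vnorm x <= 1]]%classic.

From HB Require Import structures.
From mathcomp Require Import all_boot all_order all_algebra.
From mathcomp Require Import complex.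
From mathcomp Require Import classical_sets reals.
From mathcomp Require Import ring lra.

(* Wedin's decomposition
     B^+ - A^+ = - B^+ E A^+ + B^+ B^+* E^* (I - A A^+) + (I - B^+ B) E^* A^+* A^+
   splits the difference into three terms that are pairwise orthogonal for the
   Frobenius inner product (the projectors B^+ B and A A^+ separate them), so
   their squared norms add.  Multiplying the middle term on the left by B gives
   B^+* E^* (I - A A^+), the adjoint of (I - A A^+) E B^+, whose squared norm is
   ||E B^+||^2 - ||A A^+ E B^+||^2 by Pythagoras for the projector A A^+; since
   ||B X||_F <= ||B||_2 ||X||_F this bounds the middle term from below.  The last
   term is treated the same way, multiplying by A on the right and using
   ||A^* Y||_F <= ||A||_2 ||Y||_F.  This is the first bound; exchanging A and B
   (E becomes -E) gives the second. *)

Set Implicit Arguments. Unset Strict Implicit. Unset Printing Implicit Defensive.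
Import Order.TTheory GRing.Theory Num.Theory.
Local Open Scope complex_scope.
Local Open Scope ring_scope.
Import Normc.

Section ConjugateTranspose.
Variable R : realType.
Local Notation C := R[i].

Lemma ctrmxM m n p (X : 'M[C]_(m, n)) (Y : 'M[C]_(n, p)) :
  ctrmx (X *m Y) = ctrmx Y *m ctrmx X.
Proof. by rewrite /ctrmx map_mxM trmx_mul. Qed.

Lemma ctrmxK m n (X : 'M[C]_(m, n)) : ctrmx (ctrmx X) = X.
Proof. by apply/matrixP=> i j; rewrite /ctrmx !mxE conjCK. Qed.

Lemma ctrmxD m n (X Y : 'M[C]_(m, n)) : ctrmx (X + Y) = ctrmx X + ctrmx Y.
Proof. by rewrite /ctrmx map_mxD linearD. Qed.

Lemma ctrmxN m n (X : 'M[C]_(m, n)) : ctrmx (- X) = - ctrmx X.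
Proof. by rewrite /ctrmx map_mxN linearN. Qed.

Lemma ctrmxB m n (X Y : 'M[C]_(m, n)) : ctrmx (X - Y) = ctrmx X - ctrmx Y.
Proof. by rewrite ctrmxD ctrmxN. Qed.

Lemma ctrmx0 m n : ctrmx (0 : 'M[C]_(m, n)) = 0.
Proof. by rewrite /ctrmx map_mx0 trmx0. Qed.

Lemma ctrmx1 n : ctrmx (1%:M : 'M[C]_n) = 1%:M.
Proof. by rewrite /ctrmx map_mx1 trmx1. Qed.

Lemma mxtrace_ctrmx n (X : 'M[C]_n) : \tr (ctrmx X) = (\tr X)^*.
Proof. by rewrite /ctrmx mxtrace_tr (trace_map_mx Num.conj). Qed.

End ConjugateTranspose.

Section Frobenius.
Variable R : realType.
Local Notation C := R[i].

Definition sqnormc (z : C) : R := complex.Re z ^+ 2 + complex.Im z ^+ 2.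

Definition frob2 m n (X : 'M[C]_(m, n)) : R :=
  \sum_(i < m) \sum_(j < n) sqnormc (X i j).

Lemma sqnormc_ge0 (z : C) : 0 <= sqnormc z.
Proof. by rewrite addr_ge0 ?sqr_ge0. Qed.

Lemma sqnormcE (z : C) : (sqnormc z)%:C = z * z^*.
Proof. by rewrite /sqnormc add_Re2_Im2 sqr_normc. Qed.

Lemma sqnormc_eq0 (z : C) : (sqnormc z == 0) = (z == 0).
Proof.
by case: z => a b; rewrite /sqnormc paddr_eq0 ?sqr_ge0 // !sqrf_eq0 eq_complex.
Qed.

Lemma sqnormcZ (t : R) (z : C) : sqnormc (t%:C * z) = t ^+ 2 * sqnormc z.
Proof. by case: z => a b; rewrite /sqnormc /=; ring. Qed.

Lemma frob2_ge0 m n (X : 'M[C]_(m, n)) : 0 <= frob2 X.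
Proof. by do 2![apply: sumr_ge0 => ? _]; apply: sqnormc_ge0. Qed.

Lemma sqr_frobn m n (X : 'M[C]_(m, n)) : frobn X ^+ 2 = frob2 X.
Proof. by rewrite sqr_sqrtr // frob2_ge0. Qed.

Lemma frob2_eq0 m n (X : 'M[C]_(m, n)) : frob2 X = 0 -> X = 0.
Proof.
move=> X0; apply/matrixP => i j; rewrite mxE; apply/eqP; rewrite -sqnormc_eq0.
have row0 : \sum_(j < n) sqnormc (X i j) = 0.
  by apply: (psumr_eq0P _ X0) => // k _; apply: sumr_ge0 => l _; exact: sqnormc_ge0.
by apply/eqP/(psumr_eq0P _ row0) => // k _; exact: sqnormc_ge0.
Qed.

Lemma frob2_0 m n : frob2 (0 : 'M[C]_(m, n)) = 0.
Proof. by rewrite /frob2 big1 // => i _; rewrite big1 // => j _; rewrite mxE /sqnormc expr0n addr0. Qed.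

Lemma frob2Z m n (t : R) (X : 'M[C]_(m, n)) : frob2 (t%:C *: X) = t ^+ 2 * frob2 X.
Proof.
rewrite /frob2 mulr_sumr; apply: eq_bigr => i _; rewrite mulr_sumr.
by apply: eq_bigr => j _; rewrite mxE sqnormcZ.
Qed.

Lemma frob2_trace m n (X : 'M[C]_(m, n)) : (frob2 X)%:C = \tr (X *m ctrmx X).
Proof.
rewrite /frob2 /mxtrace raddf_sum /=; apply: eq_bigr => i _.
rewrite mxE raddf_sum /=; apply: eq_bigr => j _.
by rewrite sqnormcE /ctrmx !mxE.
Qed.

Lemma frob2_ctrmx m n (X : 'M[C]_(m, n)) : frob2 (ctrmx X) = frob2 X.
Proof. by apply: complexI; rewrite !frob2_trace ctrmxK mxtrace_mulC. Qed.

Lemma frob2N m n (X : 'M[C]_(m, n)) : frob2 (- X) = frob2 X.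
Proof. by apply: complexI; rewrite !frob2_trace ctrmxN mulmxN mulNmx opprK. Qed.

Lemma frob2D m n (X Y : 'M[C]_(m, n)) :
  (frob2 (X + Y))%:C =
    (frob2 X + frob2 Y)%:C + \tr (X *m ctrmx Y) + (\tr (X *m ctrmx Y))^*.
Proof.
rewrite rmorphD /= !frob2_trace -mxtrace_ctrmx ctrmxM ctrmxK ctrmxD.
rewrite mulmxDl !mulmxDr !mxtraceD; ring.
Qed.

Lemma frob2D_orth m n (X Y : 'M[C]_(m, n)) :
  \tr (X *m ctrmx Y) = 0 -> frob2 (X + Y) = frob2 X + frob2 Y.
Proof. by move=> XY0; apply: complexI; rewrite frob2D XY0 conjC0 !addr0. Qed.

Lemma frob2D_projl m n (P : 'M[C]_m) (X Y : 'M[C]_(m, n)) :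
  ctrmx P = P -> P *m X = X -> P *m Y = 0 -> frob2 (X + Y) = frob2 X + frob2 Y.
Proof.
move=> herP PX PY; apply: frob2D_orth.
by rewrite -PX -mulmxA mxtrace_mulC -mulmxA -{1}herP -ctrmxM PY ctrmx0 mulmx0 mxtrace0.
Qed.

Lemma frob2D_projr m n (Q : 'M[C]_n) (X Y : 'M[C]_(m, n)) :
  ctrmx Q = Q -> X *m Q = X -> Y *m Q = 0 -> frob2 (X + Y) = frob2 X + frob2 Y.
Proof.
move=> herQ XQ YQ; rewrite -frob2_ctrmx ctrmxD -(frob2_ctrmx X) -(frob2_ctrmx Y).
by apply: (frob2D_projl herQ); rewrite -{1}herQ -ctrmxM ?XQ ?YQ ?ctrmx0.
Qed.

Lemma frob2_projl_compl m n (P : 'M[C]_m) (X : 'M[C]_(m, n)) :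
  ctrmx P = P -> P *m P = P -> frob2 ((1%:M - P) *m X) = frob2 X - frob2 (P *m X).
Proof.
move=> herP idP.
have := frob2D_projl (X := P *m X) (Y := (1%:M - P) *m X) herP.
rewrite -mulmxDl [P + _]addrC subrK mul1mx !mulmxA idP mulmxBr mulmx1 idP subrr mul0mx.
by move=> -> //; rewrite addrAC subrr add0r.
Qed.

Lemma frob2_projr_compl m n (Q : 'M[C]_n) (X : 'M[C]_(m, n)) :
  ctrmx Q = Q -> Q *m Q = Q -> frob2 (X *m (1%:M - Q)) = frob2 X - frob2 (X *m Q).
Proof.
move=> herQ idQ; rewrite -frob2_ctrmx ctrmxM ctrmxB ctrmx1 herQ.
by rewrite frob2_projl_compl // -{1}herQ -ctrmxM !frob2_ctrmx.
Qed.

End Frobenius.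

Section SpectralNorm.
Variable R : realType.
Local Notation C := R[i].

Definition specn_set m n (A : 'M[C]_(m, n)) : set R :=
  [set vnorm (A *m x) | x in [set x : 'cV[C]_n | vnorm x <= 1]]%classic.

Lemma vnorm_frob2 n (x : 'cV[C]_n) : vnorm x = Num.sqrt (frob2 x).
Proof. by congr Num.sqrt; apply: eq_bigr => i _; rewrite big_ord1. Qed.

Lemma frob2_cols m p (X : 'M[C]_(m, p)) : frob2 X = \sum_(j < p) frob2 (col j X).
Proof.
rewrite /frob2 exchange_big; apply: eq_bigr => j _; apply: eq_bigr => i _.
by rewrite big_ord1 mxE.
Qed.

Lemma sqnormc_le_frob2 n (x : 'cV[C]_n) j : sqnormc (x j 0) <= frob2 x.
Proof.
rewrite /frob2 (bigD1 j) //= big_ord1 lerDl.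
by do 2![apply: sumr_ge0 => ? _]; exact: sqnormc_ge0.
Qed.

Lemma sqr_normc_sqnormc (z : C) : normc z ^+ 2 = sqnormc z.
Proof. by case: z => a b; rewrite /normc sqr_sqrtr // addr_ge0 ?sqr_ge0. Qed.

Lemma normc_ge0 (z : C) : 0 <= normc z.
Proof. by case: z => a b; rewrite /normc sqrtr_ge0. Qed.

Lemma normc_sum I (r : seq I) (F : I -> C) :
  normc (\sum_(i <- r) F i) <= \sum_(i <- r) normc (F i).
Proof.
elim/big_rec2: _ => [|i y1 y2 _ IH]; first by rewrite normc0.
exact: le_trans (le_normcD _ _) (lerD (lexx _) IH).
Qed.

Lemma specn_set_ub m n (A : 'M[C]_(m, n)) : has_ubound (specn_set A).
Proof.
exists (Num.sqrt (\sum_(i < m) (\sum_(j < n) normc (A i j)) ^+ 2)).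
move=> _ [x /= x_le1 <-]; rewrite vnorm_frob2; apply: ler_wsqrtr.
have x_entry_le1 j : normc (x j 0) <= 1.
  rewrite -(ler_pXn2r (n := 2)) ?nnegrE ?normc_ge0 // expr1n sqr_normc_sqnormc.
  apply: le_trans (sqnormc_le_frob2 x j) _.
  by move: x_le1; rewrite vnorm_frob2 -{1}sqrtr1 ler_sqrt.
rewrite /frob2; apply: ler_sum => i _; rewrite big_ord1 -sqr_normc_sqnormc.
apply: lerXn2r; rewrite ?nnegrE ?normc_ge0 //.
  by apply: sumr_ge0 => j _; exact: normc_ge0.
rewrite mxE; apply: le_trans (normc_sum _ _) _; apply: ler_sum => j _.
by rewrite normcM; apply: ler_piMr (normc_ge0 _) (x_entry_le1 j).
Qed.

Lemma specn_ge0 m n (A : 'M[C]_(m, n)) : 0 <= specn A.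
Proof.
apply: (ub_le_sup (specn_set_ub A)); exists 0; rewrite /= ?mulmx0;
  by rewrite vnorm_frob2 frob2_0 sqrtr0 ?ler01.
Qed.

Lemma frob2_mulmx_col_le m n (A : 'M[C]_(m, n)) (x : 'cV[C]_n) :
  frob2 (A *m x) <= specn A ^+ 2 * frob2 x.
Proof.
have [/frob2_eq0 -> | x_neq0] := eqVneq (frob2 x) 0.
  by rewrite mulmx0 !frob2_0 mulr0.
have x_gt0 : 0 < frob2 x by rewrite lt_def x_neq0 frob2_ge0.
pose c := (Num.sqrt (frob2 x))^-1.
have c2 : c ^+ 2 = (frob2 x)^-1 by rewrite exprVn sqr_sqrtr // frob2_ge0.
have : vnorm (A *m (c%:C *: x)) <= specn A.
  apply: (ub_le_sup (specn_set_ub A)); exists (c%:C *: x) => //=.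
  by rewrite vnorm_frob2 frob2Z c2 mulVf // sqrtr1.
rewrite vnorm_frob2 -scalemxAr frob2Z c2 -(ler_pXn2r (n := 2)) ?nnegrE;
  rewrite ?sqrtr_ge0 ?specn_ge0 // sqr_sqrtr ?mulr_ge0 ?invr_ge0 ?frob2_ge0 //.
by rewrite mulrC ler_pdivrMr.
Qed.

Lemma frob2_mulmx_le m n p (A : 'M[C]_(m, n)) (X : 'M[C]_(n, p)) :
  frob2 (A *m X) <= specn A ^+ 2 * frob2 X.
Proof.
rewrite !frob2_cols mulr_sumr; apply: ler_sum => j _.
by rewrite !colE -mulmxA frob2_mulmx_col_le.
Qed.

(* [x / 0 = 0], so the bound also holds when [s = 0]. *)
Lemma ler_divr_sqr (x y s : R) : 0 <= y -> x <= s ^+ 2 * y -> x / s ^+ 2 <= y.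
Proof.
move=> y_ge0 x_le; have [-> | s_neq0] := eqVneq s 0.
  by rewrite expr0n invr0 mulr0.
by rewrite ler_pdivrMr ?exprn_even_gt0 //= mulrC.
Qed.

Lemma le_of_quadratic_ineq (w y s : R) : 0 <= y -> 0 <= s ->
  (forall t, 2 * t * w <= t ^+ 2 * y + s * w) -> w <= s * y.
Proof.
move=> y_ge0 s_ge0 quad; have [s0 | s_gt0] := eqVneq s 0.
  have := quad (w / (y + 1)); rewrite s0 mul0r addr0 mul0r.
  have y1_gt0 : 0 < y + 1 by lra.
  set t := w / (y + 1); have -> : w = t * (y + 1) by rewrite divfK ?gt_eqF.
  nra.
have := quad s; have : 0 < s by rewrite lt_def s_gt0 s_ge0.
nra.
Qed.

(* With W = A^* Y one has ||W||^2 = <Y, A W>, so expanding 0 <= ||t Y - A W||^2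
   yields the quadratic inequality (Cauchy-Schwarz in disguise). *)
Lemma frob2_ctrmx_mulmx_le m n p (A : 'M[C]_(m, n)) (Y : 'M[C]_(m, p)) :
  frob2 (ctrmx A *m Y) <= specn A ^+ 2 * frob2 Y.
Proof.
set W := ctrmx A *m Y.
have cross : \tr (Y *m ctrmx (A *m W)) = (frob2 W)%:C.
  by rewrite ctrmxM mulmxA mxtrace_mulC mulmxA frob2_trace.
apply: le_of_quadratic_ineq; rewrite ?frob2_ge0 ?exprn_ge0 ?specn_ge0 // => t.
have := frob2_ge0 (t%:C *: Y - A *m W).
have -> : frob2 (t%:C *: Y - A *m W) = t ^+ 2 * frob2 Y + frob2 (A *m W) - 2 * t * frob2 W.
  have cross' : \tr (t%:C *: Y *m ctrmx (- (A *m W))) = (- (t * frob2 W))%:C.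
    by rewrite ctrmxN mulmxN -scalemxAl raddfN /= mxtraceZ cross rmorphN rmorphM.
  have real_cross : ((- (t * frob2 W))%:C)^* = (- (t * frob2 W))%:C := conjc_real _.
  apply: complexI; rewrite frob2D cross' real_cross frob2N frob2Z.
  by rewrite !rmorphB !rmorphD !rmorphM /=; ring.
have := frob2_mulmx_le A W; lra.
Qed.

End SpectralNorm.

Section PenroseIdentities.
Variables (R : realType) (m n : nat) (A : 'M[R[i]]_(m, n)) (X : 'M[R[i]]_(n, m)).
Hypothesis AX : is_pinv A X.

Lemma pinv_projl_idem : A *m X *m (A *m X) = A *m X.
Proof. by case: AX => AXA _ _ _; rewrite mulmxA AXA. Qed.

Lemma pinv_projr_idem : X *m A *m (X *m A) = X *m A.
Proof. by case: AX => _ XAX _ _; rewrite mulmxA XAX. Qed.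

Lemma ctrmx_pinv_projl : ctrmx A *m (A *m X) = ctrmx A.
Proof. by case: AX => AXA _ herAX _; rewrite -herAX -ctrmxM AXA. Qed.

Lemma pinv_projr_ctrmx : X *m A *m ctrmx A = ctrmx A.
Proof. by case: AX => AXA _ _ herXA; rewrite -herXA -ctrmxM mulmxA AXA. Qed.

Lemma pinv_mul_ctrmx : X *m ctrmx X *m ctrmx A = X.
Proof. by case: AX => _ XAX herAX _; rewrite -mulmxA -ctrmxM herAX mulmxA XAX. Qed.

Lemma ctrmx_mul_pinv : ctrmx A *m ctrmx X *m X = X.
Proof. by case: AX => _ XAX _ herXA; rewrite -ctrmxM herXA XAX. Qed.

Lemma pinv_projl_ctrmx : A *m X *m ctrmx X = ctrmx X.
Proof. by case: AX => _ XAX herAX _; rewrite -herAX -ctrmxM mulmxA XAX. Qed.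

Lemma ctrmx_pinv_projr : ctrmx X *m (X *m A) = ctrmx X.
Proof. by case: AX => _ XAX _ herXA; rewrite -herXA -ctrmxM XAX. Qed.

End PenroseIdentities.

Section PinvDifference.
Variables (R : realType) (m n : nat).
Variables (A B : 'M[R[i]]_(m, n)) (Ad Bd : 'M[R[i]]_(n, m)).
Hypotheses (pinvA : is_pinv A Ad) (pinvB : is_pinv B Bd).

Local Notation E := (B - A).
Local Notation T1 := (- (Bd *m E *m Ad)).
Local Notation T2 := (Bd *m ctrmx Bd *m ctrmx E *m (1%:M - A *m Ad)).
Local Notation T3 := ((1%:M - Bd *m B) *m ctrmx E *m ctrmx Ad *m Ad).

Lemma pinv_sub_decomp : Bd - Ad = T1 + T2 + T3.
Proof.
have [AAdA AdAAd _ _] := pinvA; have [_ BdBBd _ _] := pinvB.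
have -> : T1 = Bd *m A *m Ad - Bd *m B *m Ad by rewrite mulmxBr mulmxBl opprB.
have -> : T2 = Bd - Bd *m A *m Ad.
  rewrite ctrmxB [Bd *m _ *m _]mulmxBr mulmxBl (pinv_mul_ctrmx pinvB).
  rewrite -(mulmxA _ (ctrmx A)) [ctrmx A *m _]mulmxBr mulmx1 (ctrmx_pinv_projl pinvA).
  by rewrite subrr mulmx0 subr0 mulmxBr mulmx1 mulmxA.
have -> : T3 = Bd *m B *m Ad - Ad.
  rewrite ctrmxB [(1%:M - _) *m _]mulmxBr [_ *m ctrmx B]mulmxBl mul1mx.
  rewrite (pinv_projr_ctrmx pinvB) subrr sub0r !mulNmx -!mulmxA [ctrmx A *m _]mulmxA.
  by rewrite (ctrmx_mul_pinv pinvA) mulmxBl mul1mx opprB mulmxA.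
by rewrite [_ + (Bd - _)]addrC !subrKA.
Qed.

Lemma frob2_pinv_sub :
  frob2 (Bd - Ad) = frob2 (Bd *m E *m Ad) + frob2 T2 + frob2 T3.
Proof.
have [_ AdAAd herQ _] := pinvA; have [_ BdBBd _ herP] := pinvB.
rewrite pinv_sub_decomp (frob2D_projl herP); first last.
- by rewrite !mulmxA [_ *m (1%:M - _)]mulmxBr mulmx1 (pinv_projr_idem pinvB) subrr !mul0mx.
- by rewrite mulmxDr mulmxN !mulmxA !BdBBd.
rewrite (frob2D_projr herQ) ?frob2N //.
- by rewrite mulNmx -!mulmxA [Ad *m _]mulmxA AdAAd.
- by rewrite -mulmxA mulmxBl mul1mx (pinv_projl_idem pinvA) subrr mulmx0.
Qed.

Lemma frob2_pinv_sub_mid_ge :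
  frob2 (E *m Bd) - frob2 (A *m Ad *m E *m Bd) <= specn B ^+ 2 * frob2 T2.
Proof.
have [_ _ herQ _] := pinvA.
have BT2 : B *m T2 = ctrmx ((1%:M - A *m Ad) *m (E *m Bd)).
  by rewrite !ctrmxM !ctrmxB ctrmx1 herQ !mulmxA (pinv_projl_ctrmx pinvB).
have -> : A *m Ad *m E *m Bd = A *m Ad *m (E *m Bd) by rewrite mulmxA.
rewrite -(frob2_projl_compl _ herQ (pinv_projl_idem pinvA)) -frob2_ctrmx -BT2.
exact: frob2_mulmx_le.
Qed.

Lemma frob2_pinv_sub_last_ge :
  frob2 (Ad *m E) - frob2 (Ad *m E *m Bd *m B) <= specn A ^+ 2 * frob2 T3.
Proof.
have [_ _ _ herP] := pinvB.
have T3A : ctrmx (T3 *m A) = (Ad *m E) *m (1%:M - Bd *m B).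
  rewrite -!mulmxA (ctrmx_pinv_projr pinvA) !ctrmxM !ctrmxB ctrmx1 herP !ctrmxK.
  by rewrite !mulmxA.
have -> : Ad *m E *m Bd *m B = Ad *m E *m (Bd *m B) by rewrite mulmxA.
rewrite -(frob2_projr_compl _ herP (pinv_projr_idem pinvB)) -T3A ctrmxM.
by rewrite -(frob2_ctrmx T3) frob2_ctrmx_mulmx_le.
Qed.

Lemma frob2_pinv_sub_ge :
  (frob2 (Ad *m E) - frob2 (Ad *m E *m Bd *m B)) / specn A ^+ 2
  + (frob2 (E *m Bd) - frob2 (A *m Ad *m E *m Bd)) / specn B ^+ 2
  + frob2 (Bd *m E *m Ad) <= frob2 (Bd - Ad).
Proof.
have T2_ge := ler_divr_sqr (frob2_ge0 T2) frob2_pinv_sub_mid_ge.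
have T3_ge := ler_divr_sqr (frob2_ge0 T3) frob2_pinv_sub_last_ge.
rewrite frob2_pinv_sub; lra.
Qed.

End PinvDifference.

Theorem theorem3p6 (R : realType) (m n r s : nat)
  (A B : 'M[R[i]]_(m, n)) (Ad Bd : 'M[R[i]]_(n, m)) :
  \rank A = r -> \rank B = s ->
  is_pinv A Ad -> is_pinv B Bd ->
  let E := B - A in
  let alpha1 :=
    (frobn (Ad *m E) ^+ 2 - frobn (Ad *m E *m Bd *m B) ^+ 2) / specn A ^+ 2
    + (frobn (E *m Bd) ^+ 2 - frobn (A *m Ad *m E *m Bd) ^+ 2) / specn B ^+ 2 in
  let alpha2 :=
    (frobn (E *m Ad) ^+ 2 - frobn (B *m Bd *m E *m Ad) ^+ 2) / specn A ^+ 2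
    + (frobn (Bd *m E) ^+ 2 - frobn (Bd *m E *m Ad *m A) ^+ 2) / specn B ^+ 2 in
  Num.max (alpha1 + frobn (Bd *m E *m Ad) ^+ 2)
          (alpha2 + frobn (Ad *m E *m Bd) ^+ 2)
  <= frobn (Bd - Ad) ^+ 2.
Proof.
move=> _ _ pinvA pinvB; cbv zeta; rewrite !sqr_frobn ge_max.
apply/andP; split; first exact: frob2_pinv_sub_ge.
have := frob2_pinv_sub_ge pinvB pinvA.
have -> : A - B = - (B - A) by rewrite opprB.
rewrite -(opprB Bd) !mulmxN !mulNmx !frob2N.
by rewrite [X in X + _ <= _]addrC.
Qed.
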